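(* The axiom system $APAL_{int}$ is complete with respect to the class of all topo-models: for every formula $\varphi\in\mathcal{L}_{APAL_{int}}$, if $\varphi$ is valid in every topo-model, then $\varphi$ is a theorem of $APAL_{int}$.
   Context: Fix a countable set $\mathit{Prop}$ of propositional variables and a finite non-empty set $\mathcal{A}$ of agents. $\mathcal{L}_{APAL_{int}}$: $\varphi ::= p \mid \neg\varphi \mid \varphi\wedge\varphi \mid K_i\varphi \mid \mathrm{int}(\varphi)\mid [\varphi]\varphi\mid\Box\varphi$; $\mathcal{L}_{PAL_{int}}$ is its $\Box$-free fragment; $\bot:=p\wedge\neg p$, other connectives are abbreviations. Topo-models: $(X,\tau)$ a topological space with interior operator $\mathrm{Int}$. A neighbourhood function set $\Phi$ is a set of partial functions $\theta$ from $X$ to functions $\mathcal{A}\to\tau$ such that for all $x,y\in Dom(\theta)$, $i\in\mathcal{A}$, $U\in\tau$: (1) $\theta(x)(i)\in\tau$; (2) $x\in\theta(x)(i)$; (3) $\theta(x)(i)\subseteq Dom(\theta)$; (4) $y\in\theta(x)(i)$ implies $\theta(x)(i)=\theta(y)(i)$; (5) $\theta|_U\in\Phi$, where $Dom(\theta|_U)=Dom(\theta)\cap U$, $\theta|_U(x)(i)=\theta(x)(i)\cap U$. A topo-model is $(X,\tau,\Phi,V)$ with $V(p)\subseteq X$. Neighbourhood situations are $(x,\theta)$, $\theta\in\Phi$, $x\in Dom(\theta)$. Semantics: $(x,\theta)\models p$ iff $x\in V(p)$; Booleans usual; $(x,\theta)\models K_i\varphi$ iff $(y,\theta)\models\varphi$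 for all $y\in\theta(x)(i)$; $(x,\theta)\models\mathrm{int}(\varphi)$ iff $x\in\mathrm{Int}([\![\varphi]\!]^\theta)$ with $[\![\varphi]\!]^\theta=\{y\in Dom(\theta)\mid(y,\theta)\models\varphi\}$; $(x,\theta)\models[\varphi]\psi$ iff $(x,\theta)\models\mathrm{int}(\varphi)$ implies $(x,\theta^\varphi)\models\psi$, with $\theta^\varphi=\theta|_{\mathrm{Int}([\![\varphi]\!]^\theta)}$; $(x,\theta)\models\Box\varphi$ iff $(x,\theta)\models[\psi]\varphi$ for all $\psi\in\mathcal{L}_{PAL_{int}}$. Validity = truth at all neighbourhood situations. Necessity forms: $\xi(\sharp)::=\sharp\mid\varphi\to\xi(\sharp)\mid K_i\xi(\sharp)\mid\mathrm{int}(\xi(\sharp))\mid[\varphi]\xi(\sharp)$; $\xi(\varphi)$ replaces the unique $\sharp$ by $\varphi$. $APAL_{int}$: axioms: propositional tautologies; $K_i(\varphi\to\psi)\to(K_i\varphi\to K_i\psi)$; $K_i\varphi\to\varphi$; $K_i\varphi\to K_iK_i\varphi$; $\neg K_i\varphi\to K_i\neg K_i\varphi$; $\mathrm{int}(\varphi\to\psi)\to(\mathrm{int}(\varphi)\to\mathrm{int}(\psi))$; $\mathrm{int}(\varphi)\to\varphi$; $\mathrm{int}(\varphi)\to\mathrm{int}(\mathrm{int}(\varphi))$; $K_i\varphi\to\mathrm{int}(\varphi)$; (R1) $[\varphi]p\leftrightarrow(\mathrm{int}(\varphi)\to p)$; (R2) $[\varphi]\neg\psi\leftrightarrow(\mathrm{int}(\varphi)\to\neg[\varphi]\psi)$;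 (R3) $[\varphi](\psi\wedge\chi)\leftrightarrow[\varphi]\psi\wedge[\varphi]\chi$; (R4) $[\varphi]\mathrm{int}(\psi)\leftrightarrow(\mathrm{int}(\varphi)\to\mathrm{int}([\varphi]\psi))$; (R5) $[\varphi]K_i\psi\leftrightarrow(\mathrm{int}(\varphi)\to K_i[\varphi]\psi)$; (R6) $[\varphi][\psi]\chi\leftrightarrow[\neg[\varphi]\neg\mathrm{int}(\psi)]\chi$; (R7) $\Box\varphi\to[\chi]\varphi$ for $\chi\in\mathcal{L}_{PAL_{int}}$. Rules: modus ponens; from $\varphi$ infer $K_i\varphi$; from $\varphi$ infer $\mathrm{int}(\varphi)$; from $\varphi$ infer $[\psi]\varphi$; (DR5) from $\xi([\psi]\chi)$ for all $\psi\in\mathcal{L}_{PAL_{int}}$ infer $\xi(\Box\chi)$. Theorems: smallest set containing the axioms and closed under the rules. *)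

From mathcomp Require Import all_boot.
From mathcomp Require Import boolp classical_sets topology.

Set Implicit Arguments.
Unset Strict Implicit.
Unset Printing Implicit Defensive.
Local Open Scope classical_set_scope.

Section Syntax.
Variable A : Type.

Inductive form : Type :=
| Var  : nat -> form
| Neg  : form -> form
| And  : form -> form -> form
| K    : A -> form -> form
| Int  : form -> form
| Ann  : form -> form -> form
| Box  : form -> form.

Fixpoint pal (f : form) : bool :=
  match f with
  | Var _ => true
  | Neg a => pal a
  | And a b => pal a && pal b
  | K _ a => pal a
  | Int a => pal a
  | Ann a b => pal a && pal b
  | Box _ => false
  end.

Definition Imp (a b : form) : form := Neg (And a (Neg b)).
Definition Iff (a b : form) : form := And (Imp a b) (Imp b a).

(* Propositional tautologies: formulas true under every Boolean valuation
   that treats all non-Boolean subformulas (variables, K_i, int, [.], Box)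
   as atoms. *)
Fixpoint peval (v : form -> bool) (f : form) : bool :=
  match f with
  | Neg a => ~~ peval v a
  | And a b => peval v a && peval v b
  | _ => v f
  end.
Definition taut (f : form) : Prop := forall v, peval v f = true.

Inductive nform : Type :=
| NHole : nform
| NImp  : form -> nform -> nform
| NK    : A -> nform -> nform
| NInt  : nform -> nform
| NAnn  : form -> nform -> nform.

Fixpoint nfill (xi : nform) (f : form) : form :=
  match xi with
  | NHole => f
  | NImp a x => Imp a (nfill x f)
  | NK i x => K i (nfill x f)
  | NInt x => Int (nfill x f)
  | NAnn a x => Ann a (nfill x f)
  end.

Inductive thm : form -> Prop :=
| Ax_taut f : taut f -> thm f
| Ax_KK i a b : thm (Imp (K i (Imp a b)) (Imp (K i a) (K i b)))
| Ax_KT i a : thm (Imp (K i a) a)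
| Ax_K4 i a : thm (Imp (K i a) (K i (K i a)))
| Ax_K5 i a : thm (Imp (Neg (K i a)) (K i (Neg (K i a))))
| Ax_intK a b : thm (Imp (Int (Imp a b)) (Imp (Int a) (Int b)))
| Ax_intT a : thm (Imp (Int a) a)
| Ax_int4 a : thm (Imp (Int a) (Int (Int a)))
| Ax_Kint i a : thm (Imp (K i a) (Int a))
| Ax_R1 a p : thm (Iff (Ann a (Var p)) (Imp (Int a) (Var p)))
| Ax_R2 a b : thm (Iff (Ann a (Neg b)) (Imp (Int a) (Neg (Ann a b))))
| Ax_R3 a b c : thm (Iff (Ann a (And b c)) (And (Ann a b) (Ann a c)))
| Ax_R4 a b : thm (Iff (Ann a (Int b)) (Imp (Int a) (Int (Ann a b))))
| Ax_R5 i a b : thm (Iff (Ann a (K i b)) (Imp (Int a) (K i (Ann a b))))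
| Ax_R6 a b c : thm (Iff (Ann a (Ann b c)) (Ann (Neg (Ann a (Neg (Int b)))) c))
| Ax_R7 a c : pal c -> thm (Imp (Box a) (Ann c a))
| R_MP a b : thm (Imp a b) -> thm a -> thm b
| R_NecK i a : thm a -> thm (K i a)
| R_NecInt a : thm a -> thm (Int a)
| R_NecAnn a b : thm a -> thm (Ann b a)
| R_DR5 xi c : (forall b, pal b -> thm (nfill xi (Ann b c))) ->
               thm (nfill xi (Box c)).

End Syntax.

Section Semantics.
Variable A : Type.

(* A partial function theta from X to functions A -> set X, represented as
   X -> option (A -> set X); Dom theta = {x | theta x <> None}. *)
Definition pfun (X : Type) := X -> option (A -> set X).

Definition dom (X : Type) (th : pfun X) : set X := [set x | th x <> None].

(* theta(x)(i) (empty outside the domain; only used for x in Dom theta) *)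
Definition nb (X : Type) (th : pfun X) (x : X) (i : A) : set X :=
  match th x with Some f => f i | None => set0 end.

Definition restrict (X : Type) (th : pfun X) (U : set X) : pfun X :=
  fun x => if `[< U x >] then option_map (fun f i => f i `&` U) (th x)
           else None.

Definition nfs (X : topologicalType) (Phi : set (pfun X)) : Prop :=
  forall th, Phi th ->
    (forall x f, th x = Some f -> forall i,
        [/\ open (f i), f i x, f i `<=` dom th &
            forall y g, f i y -> th y = Some g -> g i = f i]) /\
    (forall U : set X, open U -> Phi (restrict th U)).

Record topo_model := TopoModel {
  carrier : topologicalType;
  Phi : set (pfun carrier);
  Phi_nfs : nfs Phi;
  valuation : nat -> set carrier
}.

Variable M : topo_model.
Notation X := (carrier M).

(* Satisfaction for box-free formulas (used to interpret the announced
   formula psi in the clause for Box; the Box clause here is never used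
   since psi ranges over L_{PAL_int}). *)
Fixpoint satP (f : form A) (th : pfun X) (x : X) : Prop :=
  match f with
  | Var p => valuation p x
  | Neg a => ~ satP a th x
  | And a b => satP a th x /\ satP b th x
  | K i a => forall y, nb th x i y -> satP a th y
  | Int a => interior [set y | dom th y /\ satP a th y] x
  | Ann a b =>
      let U := interior [set y | dom th y /\ satP a th y] in
      U x -> satP b (restrict th U) x
  | Box _ => False
  end.

Fixpoint sat (f : form A) (th : pfun X) (x : X) : Prop :=
  match f with
  | Var p => valuation p x
  | Neg a => ~ sat a th x
  | And a b => sat a th x /\ sat b th x
  | K i a => forall y, nb th x i y -> sat a th y
  | Int a => interior [set y | dom th y /\ sat a th y] x
  | Ann a b =>
      let U := interior [set y | dom th y /\ sat a th y] in
      U x -> sat b (restrict th U) x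
  | Box a =>
      forall c, pal c ->
        let U := interior [set y | dom th y /\ satP c th y] in
        U x -> sat a (restrict th U) x
  end.

End Semantics.

Definition valid (A : Type) (f : form A) : Prop :=
  forall (M : topo_model A) (th : pfun A (carrier M)) (x : carrier M),
    Phi th -> dom th x -> sat f th x.

From HB Require Import structures.
From mathcomp Require Import all_boot boolp classical_sets topology zify.

(** Completeness via a canonical model.  Its points are the maximal
consistent sets of formulas closed under the infinitary rule DR5.  Lindenbaum's
lemma holds for such sets because the DR5 instances can be enumerated together
with the formulas, and whenever [~ xi(Box c)] is consistent the rule itself
yields a box-free [b] with [~ xi([b] c)] consistent.  The topology is the
Alexandrov topology of the preorder "every [int b] in [x] has [b] in [y]";
agent [i]'s neighbourhood of [x] is the set of points with the same
[K_i]-formulas, and the neighbourhood function set consists of the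
restrictions of this one function to open sets.  In the truth lemma, [K_i]
and [int] are handled by Lindenbaum applied to [{f | K_i f in x}] and
[{f | int f in x}]; announcements are pushed inwards by R1-R6, which lower a
weight, and [Box c] is traded, through R7 and DR5, for the announcements
[[b] c] with box-free [b], which lower the Box-depth. *)

Set Implicit Arguments.
Unset Strict Implicit.
Unset Printing Implicit Defensive.

Local Open Scope classical_set_scope.

Ltac taut_solve :=
  let v := fresh "v" in move=> v; rewrite /Imp /Iff /=;
  repeat match goal with
   | |- context [peval v ?x] => case: (peval v x)
   | |- context [v ?x] => case: (v x)
   end; by [].

Section FormCountable.
Variable A : countType.
Notation F := (form A).

Fixpoint tree_of_form (f : F) : GenTree.tree (nat + A) :=
  match f with
  | Var p => GenTree.Leaf (inl p)
  | Neg a => GenTree.Node 0 [:: tree_of_form a]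
  | And a b => GenTree.Node 1 [:: tree_of_form a; tree_of_form b]
  | K i a => GenTree.Node 2 [:: GenTree.Leaf (inr i); tree_of_form a]
  | Int a => GenTree.Node 3 [:: tree_of_form a]
  | Ann a b => GenTree.Node 4 [:: tree_of_form a; tree_of_form b]
  | Box a => GenTree.Node 5 [:: tree_of_form a]
  end.

Fixpoint form_of_tree (t : GenTree.tree (nat + A)) : F :=
  match t with
  | GenTree.Leaf (inl p) => Var A p
  | GenTree.Node 0 [:: a] => Neg (form_of_tree a)
  | GenTree.Node 1 [:: a; b] => And (form_of_tree a) (form_of_tree b)
  | GenTree.Node 2 [:: GenTree.Leaf (inr i); a] => K i (form_of_tree a)
  | GenTree.Node 3 [:: a] => Int (form_of_tree a)
  | GenTree.Node 4 [:: a; b] => Ann (form_of_tree a) (form_of_tree b)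
  | GenTree.Node 5 [:: a] => Box (form_of_tree a)
  | _ => Var A 0
  end.

Lemma tree_of_formK : cancel tree_of_form form_of_tree.
Proof. by elim=> //= *; congruence. Qed.

End FormCountable.

HB.instance Definition _ (A : countType) :=
  Countable.copy (form A) (can_type (@tree_of_formK A)).

Section NformCountable.
Variable A : countType.
Notation F := (form A).

Fixpoint tree_of_nform (xi : nform A) : GenTree.tree (F + A) :=
  match xi with
  | NHole => GenTree.Node 0 [::]
  | NImp a x => GenTree.Node 1 [:: GenTree.Leaf (inl a); tree_of_nform x]
  | NK i x => GenTree.Node 2 [:: GenTree.Leaf (inr i); tree_of_nform x]
  | NInt x => GenTree.Node 3 [:: tree_of_nform x]
  | NAnn a x => GenTree.Node 4 [:: GenTree.Leaf (inl a); tree_of_nform x]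
  end.

Fixpoint nform_of_tree (t : GenTree.tree (F + A)) : nform A :=
  match t with
  | GenTree.Node 1 [:: GenTree.Leaf (inl a); x] => NImp a (nform_of_tree x)
  | GenTree.Node 2 [:: GenTree.Leaf (inr i); x] => NK i (nform_of_tree x)
  | GenTree.Node 3 [:: x] => NInt (nform_of_tree x)
  | GenTree.Node 4 [:: GenTree.Leaf (inl a); x] => NAnn a (nform_of_tree x)
  | _ => NHole A
  end.

Lemma tree_of_nformK : cancel tree_of_nform nform_of_tree.
Proof. by elim=> //= *; congruence. Qed.

End NformCountable.

HB.instance Definition _ (A : countType) :=
  Countable.copy (nform A) (can_type (@tree_of_nformK A)).

Lemma unpickle_onto (T : countType) (t : T) : exists n, unpickle n = Some t.
Proof. by exists (pickle t); rewrite pickleK. Qed.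

Section Theories.
Variable A : countType.
Notation F := (form A).

Record theory (T : F -> Prop) : Prop := Theory {
  theory_thm : forall f, thm f -> T f;
  theory_mp : forall a b, T (Imp a b) -> T a -> T b;
  theory_dr5 : forall xi c, (forall b, pal b -> T (nfill xi (Ann b c))) ->
                            T (nfill xi (Box c)) }.

Lemma thm_theory : theory (@thm A).
Proof. by constructor; [| exact: R_MP | exact: R_DR5]. Qed.

Section TheoryFacts.
Variables (T : F -> Prop) (hT : theory T).

Lemma theory_taut f : taut f -> T f.
Proof. by move=> h; apply: (theory_thm hT); apply: Ax_taut. Qed.

Lemma theory_taut1 a b : taut (Imp a b) -> T a -> T b.
Proof. by move=> h; apply: (theory_mp hT (theory_taut h)). Qed.

Lemma theory_taut2 a b c : taut (Imp a (Imp b c)) -> T a -> T b -> T c.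
Proof. by move=> h ha; apply: (theory_mp hT (theory_taut1 h ha)). Qed.

Lemma theory_preimage (op : F -> F) (nop : nform A -> nform A) :
  (forall f, thm f -> thm (op f)) ->
  (forall a b, thm (Imp (op (Imp a b)) (Imp (op a) (op b)))) ->
  (forall xi f, nfill (nop xi) f = op (nfill xi f)) ->
  theory (fun f => T (op f)).
Proof.
move=> nec dist fill; constructor.
- by move=> f /nec; apply: (theory_thm hT).
- by move=> a b hab; apply: (theory_mp hT (theory_mp hT (theory_thm hT (dist a b)) hab)).
- by move=> xi c h; rewrite -fill; apply: (theory_dr5 hT) => b pb; rewrite fill; apply: h.
Qed.

End TheoryFacts.

Lemma K_theory T i : theory T -> theory (fun f => T (K i f)).
Proof.
move=> hT; apply: (theory_preimage hT (nop := NK i)) => //.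
- exact: R_NecK.
- exact: Ax_KK.
Qed.

Lemma int_theory T : theory T -> theory (fun f => T (Int f)).
Proof.
move=> hT; apply: (theory_preimage hT (nop := @NInt A)) => //.
- exact: R_NecInt.
- exact: Ax_intK.
Qed.

Record maxcons (x : F -> Prop) : Prop := Maxcons {
  maxcons_theory : theory x;
  mem_neg : forall a, x (Neg a) <-> ~ x a }.

Section MaximalConsistent.
Variables (x : F -> Prop) (hx : maxcons x).
Let hT := maxcons_theory hx.

Lemma mem_thm f : thm f -> x f. Proof. exact: theory_thm. Qed.

Lemma mem_mp a b : thm (Imp a b) -> x a -> x b.
Proof. by move=> /mem_thm; apply: theory_mp. Qed.

Lemma mem_and a b : x (And a b) <-> x a /\ x b.
Proof.
split=> [h|[ha hb]]; last by apply: (theory_taut2 hT _ ha hb); taut_solve.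
by split; apply: (theory_taut1 hT _ h); taut_solve.
Qed.

Lemma mem_imp a b : x (Imp a b) <-> (x a -> x b).
Proof.
rewrite /Imp (mem_neg hx) mem_and (mem_neg hx).
split=> [h ha|h [/h hb]] //; apply: contrapT => hb; exact: h.
Qed.

Lemma mem_iff a b : thm (Iff a b) -> (x a <-> x b).
Proof. by move=> /mem_thm; rewrite /Iff mem_and !mem_imp. Qed.

Lemma mem_Ann_mp a b c : x (Int a) -> x (Ann a (Imp b c)) -> x (Ann a b) -> x (Ann a c).
Proof.
move=> hi; rewrite /Imp (mem_iff (Ax_R2 _ _)) mem_imp => /(_ hi).
rewrite (mem_neg hx) (mem_iff (Ax_R3 _ _ _)) mem_and => hbc hb.
apply: contrapT => hc; apply: hbc; split=> //.
by rewrite (mem_iff (Ax_R2 _ _)) mem_imp (mem_neg hx).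
Qed.

Lemma mem_Box c : x (Box c) <-> forall b, pal b -> x (Ann b c).
Proof.
split=> [h b pb | h]; first exact: mem_mp (Ax_R7 c pb) h.
exact: (theory_dr5 hT (xi := NHole A)).
Qed.

Lemma mem_Ann_Box a c : (forall b, pal b -> x (Ann a (Ann b c))) -> x (Ann a (Box c)).
Proof. exact: (theory_dr5 hT (xi := NAnn a (NHole A))). Qed.

Lemma mem_Ann_Box_Ann a b c : pal b -> x (Int a) -> x (Ann a (Box c)) -> x (Ann a (Ann b c)).
Proof.
by move=> pb hi; apply: mem_Ann_mp hi _; apply: mem_thm; apply: R_NecAnn; exact: Ax_R7.
Qed.

End MaximalConsistent.

Section Lindenbaum.
Variables (T : F -> Prop) (hT : theory T) (d0 : F).
Hypothesis d0_consistent : ~ T (Neg d0).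

Definition consistent (d : F) : Prop := ~ T (Neg d).

Definition task := (F + nform A * F)%type.

Definition witness (d : F) (xi : nform A) (c : F) : F :=
  xget (Var A 0) [set b | pal b /\
    consistent (And (And d (Neg (nfill xi (Box c)))) (Neg (nfill xi (Ann b c))))].

Definition step (t : option task) (d : F) : F :=
  match t with
  | Some (inl f) => if pselect (consistent (And d f)) then And d f else And d (Neg f)
  | Some (inr (xi, c)) =>
      if pselect (consistent (And d (Neg (nfill xi (Box c))))) then
        And (And d (Neg (nfill xi (Box c)))) (Neg (nfill xi (Ann (witness d xi c) c)))
      else d
  | None => d
  end.

Fixpoint chain n := if n is n'.+1 then step (unpickle n') (chain n') else d0.

Lemma witnessP d xi c : consistent (And d (Neg (nfill xi (Box c)))) ->
  pal (witness d xi c) /\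
  consistent (And (And d (Neg (nfill xi (Box c)))) (Neg (nfill xi (Ann (witness d xi c) c)))).
Proof.
set e := And d _ => hok.
suff: exists b, pal b /\ consistent (And e (Neg (nfill xi (Ann b c)))) by apply: xgetPex.
apply: contrapT => nex; apply: hok.
have H : forall b, pal b -> T (nfill (NImp e xi) (Ann b c)).
  by move=> b pb; apply: contrapT => hn; apply: nex; exists b.
by apply: (theory_taut1 hT _ (theory_dr5 hT H)); taut_solve.
Qed.

Lemma chain_consistent n : consistent (chain n).
Proof.
elim: n => //= n IH; case: (unpickle n) => [[f|[xi c]]|] //=.
  case: pselect => // h1 h2; apply: IH.
  by apply: (theory_taut2 hT _ (contrapT h1) h2); taut_solve.
by case: pselect => [h|//]; have [] := witnessP h.
Qed.

Lemma chain_succ n : T (Imp (chain n.+1) (chain n)).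
Proof.
rewrite /=; case: (unpickle n) => [[f|[xi c]]|] /=; try case: pselect => ? /=;
  by apply: (theory_taut hT); taut_solve.
Qed.

Lemma chain_antitone n m : n <= m -> T (Imp (chain m) (chain n)).
Proof.
move=> /subnK <-; elim: (m - n) => [|k IH]; first by apply: (theory_taut hT); taut_solve.
by apply: (theory_taut2 hT _ (chain_succ (k + n)) IH); taut_solve.
Qed.

Definition limit : F -> Prop := fun f => exists n, T (Imp (chain n) f).

Lemma limit_sub f : T f -> limit f.
Proof. by move=> h; exists 0; apply: (theory_taut1 hT _ h); taut_solve. Qed.

Lemma limit_d0 : limit d0.
Proof. by exists 0; apply: (theory_taut hT); taut_solve. Qed.

Lemma chain_decide n a : unpickle n = Some (inl a : task) ->
  T (Imp (chain n.+1) a) \/ T (Imp (chain n.+1) (Neg a)).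
Proof.
by move=> /= -> /=; case: pselect => ? /=; [left | right];
  apply: (theory_taut hT); taut_solve.
Qed.

Lemma chain_witness n xi c : unpickle n = Some (inr (xi, c) : task) ->
  consistent (And (chain n) (Neg (nfill xi (Box c)))) ->
  T (Imp (chain n.+1) (Neg (nfill xi (Ann (witness (chain n) xi c) c)))).
Proof.
move=> /= -> /= ok; case: pselect => [? /=|//].
by apply: (theory_taut hT); taut_solve.
Qed.

Lemma limit_common n1 n2 a b : T (Imp (chain n1) a) -> T (Imp (chain n2) b) ->
  exists m, T (Imp (chain m) a) /\ T (Imp (chain m) b).
Proof.
have weaken n m f : n <= m -> T (Imp (chain n) f) -> T (Imp (chain m) f).
  by move=> /chain_antitone h1 h2; apply: (theory_taut2 hT _ h1 h2); taut_solve.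
move=> h1 h2; exists (maxn n1 n2).
by split; [apply: weaken h1; apply: leq_maxl | apply: weaken h2; apply: leq_maxr].
Qed.

Lemma limit_contra a : limit a -> limit (Neg a) -> False.
Proof.
move=> [n1 h1] [n2 h2]; have [m [g1 g2]] := limit_common h1 h2.
by apply: (@chain_consistent m); apply: (theory_taut2 hT _ g1 g2); taut_solve.
Qed.

Lemma limit_theory : theory limit.
Proof.
constructor.
- by move=> f hf; apply: limit_sub; apply: (theory_thm hT).
- move=> a b [n1 h1] [n2 h2]; have [m [g1 g2]] := limit_common h1 h2.
  by exists m; apply: (theory_taut2 hT _ g1 g2); taut_solve.
- move=> xi c H; have [n n_task] := unpickle_onto (inr (xi, c) : task).
  have [ok|/contrapT inc] := pselect (consistent (And (chain n) (Neg (nfill xi (Box c))))).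
    have [pw _] := witnessP ok.
    by case: (limit_contra (H _ pw)); exists n.+1; apply: chain_witness.
  by exists n; apply: (theory_taut1 hT _ inc); taut_solve.
Qed.

Lemma limit_maxcons : maxcons limit.
Proof.
split=> [|a]; first exact: limit_theory.
split=> [h ha|hna]; first exact: limit_contra ha h.
have [n n_task] := unpickle_onto (inl a : task).
by case: (chain_decide n_task) => h; [case: hna|]; exists n.+1.
Qed.

End Lindenbaum.

Lemma lindenbaum T a : theory T -> ~ T a ->
  exists2 x, maxcons x & (forall f, T f -> x f) /\ ~ x a.
Proof.
move=> hT hna.
have ok : ~ T (Neg (Neg a)).
  by move=> h; apply: hna; apply: (theory_taut1 hT _ h); taut_solve.
exists (limit T (Neg a)); first exact: limit_maxcons.
split=> [f|]; first exact: limit_sub.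
by apply/(mem_neg (limit_maxcons hT ok)); apply: limit_d0.
Qed.

End Theories.

Section Restriction.
Variables (A X : Type).
Implicit Types (th : pfun A X) (x : X).

Lemma restrictI th U V : restrict (restrict th U) V = restrict th (U `&` V).
Proof.
apply: funext => x; rewrite /restrict.
case: (asboolP (V x)) => hV; case: (asboolP (U x)) => hU;
  case: (asboolP ((U `&` V) x)) => [[]|hUV] //=; try by case: hUV.
by move=> _ _; case: (th x) => //= f; congr Some; apply: funext => i; rewrite setIA.
Qed.

Lemma dom_restrict th U x : dom (restrict th U) x <-> U x /\ dom th x.
Proof.
rewrite /dom /restrict /=; case: (asboolP (U x)) => hU; last by split=> // -[].
by case: (th x) => //=; split=> // -[].
Qed.

Lemma nb_restrict th U x i : U x -> nb (restrict th U) x i = nb th x i `&` U.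
Proof.
move=> hU; rewrite /nb /restrict; case: (asboolP (U x)) => // _.
by case: (th x) => //=; rewrite set0I.
Qed.

End Restriction.

Section Satisfaction.
Variables (A : Type) (M : topo_model A).
Notation F := (form A).
Implicit Types (th : pfun A (carrier M)) (x : carrier M).

Lemma sat_imp a b th x : sat (Imp a b) th x <-> (sat a th x -> sat b th x).
Proof.
rewrite /Imp /=; split=> [h ha|h [/h hb]] //.
by apply: contrapT => hb; apply: h.
Qed.

Lemma sat_Ann_vacuous a b th x : ~ sat (Int a) th x -> sat (Ann a b) th x.
Proof. by move=> h /= /h. Qed.

Lemma satP_pal c th x : pal c -> satP c th x <-> sat c th x.
Proof.
elim: c th x => [p|a IH|a IHa b IHb|i a IH|a IH|a IHa b IHb|//] th x /=.
- by [].
- by move=> pa; rewrite IH.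
- by move=> /andP[pa pb]; rewrite IHa // IHb.
- by move=> pa; split=> h y /h /IH; apply.
- move=> pa.
  suff -> : [set y | dom th y /\ satP a th y] = [set y | dom th y /\ sat a th y] by [].
  by apply/seteqP; split=> y [dy /(IH _ _ pa)].
- move=> /andP[pa pb].
  have -> : [set y | dom th y /\ satP a th y] = [set y | dom th y /\ sat a th y].
    by apply/seteqP; split=> y [dy /(IHa _ _ pa)].
  by split=> h /h /IHb; apply.
Qed.

Lemma sat_Box c th x : sat (Box c) th x <-> forall b, pal b -> sat (Ann b c) th x.
Proof.
have E b : pal b -> [set y | dom th y /\ satP b th y] = [set y | dom th y /\ sat b th y].
  by move=> pb; apply/seteqP; split=> y [dy /(satP_pal _ _ pb)].
by split=> h b pb; move: (h b pb); rewrite /= (E b pb).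
Qed.

Lemma sat_Ann_Box a c th x :
  sat (Ann a (Box c)) th x <-> forall b, pal b -> sat (Ann a (Ann b c)) th x.
Proof.
split=> [h b pb /= hU | h /= hU]; first by move: (h hU) => /sat_Box; apply.
by apply/sat_Box => b pb; apply: h.
Qed.

End Satisfaction.

Section Reduction.
Variable A : Type.
Notation F := (form A).

(* No reduction axiom applies to [[a] Box c]; [reduct] is the identity there. *)
Definition reduct (a b : F) : F :=
  match b with
  | Var p => Imp (Int a) (Var A p)
  | Neg b => Imp (Int a) (Neg (Ann a b))
  | And b c => And (Ann a b) (Ann a c)
  | K i b => Imp (Int a) (K i (Ann a b))
  | Int b => Imp (Int a) (Int (Ann a b))
  | Ann b c => Ann (Neg (Ann a (Neg (Int b)))) c
  | Box _ => Ann a b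
  end.

Lemma thm_reduct a b : thm (Iff (Ann a b) (reduct a b)).
Proof.
case: b => *; [exact: Ax_R1 | exact: Ax_R2 | exact: Ax_R3 | exact: Ax_R5
  | exact: Ax_R4 | exact: Ax_R6 | by apply: Ax_taut; taut_solve].
Qed.

Variable M : topo_model A.
Implicit Types (th : pfun A (carrier M)) (x : carrier M).

Section Announcement.
Variables (a : F) (th : pfun A (carrier M)).
Let U := interior [set y | dom th y /\ sat a th y].
Let U_open : open U. Proof. exact: open_interior. Qed.

Lemma sat_Ann_Int b x : sat (Ann a (Int b)) th x <-> sat (Imp (Int a) (Int (Ann a b))) th x.
Proof.
rewrite sat_imp /= -/U.
have -> : [set y | dom (restrict th U) y /\ sat b (restrict th U) y] =
          U `&` [set y | dom th y /\ (U y -> sat b (restrict th U) y)].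
  apply/seteqP; split=> y /=; first by move=> [/dom_restrict [hU hd] hb]; split=> //; split.
  by move=> [hU [hd hb]]; split; [apply/dom_restrict | apply: hb].
rewrite interiorI (interior_id _).1 //.
by split=> h hU; [case: (h hU) | split=> //; apply: h].
Qed.

Lemma sat_Ann_Ann b c x :
  sat (Ann a (Ann b c)) th x <-> sat (Ann (Neg (Ann a (Neg (Int b)))) c) th x.
Proof.
rewrite /= -/U.
set V := interior [set y | dom (restrict th U) y /\ sat b (restrict th U) y].
have VU y : V y -> U y by move=> /interior_subset [/dom_restrict []].
have -> : [set y | dom th y /\ ~ (U y -> ~ V y)] = V.
  apply/seteqP; split=> y /=; first by move=> [_ h]; apply: contrapT => hV; apply: h.
  by move=> hV; split; [case: (interior_subset (VU y hV)) | move/(_ (VU y hV))].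
rewrite (interior_id _).1 ?restrictI; last exact: open_interior.
have -> : U `&` V = V by apply/seteqP; split=> y; [case | move=> hV; split=> //; apply: VU].
by split=> h hV; [exact: h (VU _ hV) hV | exact: h].
Qed.

End Announcement.

Lemma sat_reduct a b th x : sat (Ann a b) th x <-> sat (reduct a b) th x.
Proof.
case: b => [p|b|b c|i b|b|b c|c].
- by rewrite sat_imp.
- by rewrite sat_imp /=; tauto.
- by rewrite /=; tauto.
- rewrite sat_imp /=; split=> h hU y.
    by move=> hy hUy; apply: h => //; rewrite nb_restrict.
  by rewrite nb_restrict // => -[hy hUy]; apply: h.
- exact: sat_Ann_Int.
- exact: sat_Ann_Ann.
- by [].
Qed.

End Reduction.

Section Rank.
Variable A : Type.
Notation F := (form A).

Fixpoint box_depth (f : F) : nat :=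
  match f with
  | Var _ => 0
  | Neg a | K _ a | Int a => box_depth a
  | And a b => maxn (box_depth a) (box_depth b)
  | Ann a b => box_depth a + box_depth b
  | Box a => (box_depth a).+1
  end.

(* The coefficient [4 + weight a] outweighs the prefix [int a -> _] that
   R1, R2, R4 and R5 put in front of an announcement, so reducts are lighter. *)
Fixpoint weight (f : F) : nat :=
  match f with
  | Var _ => 1
  | Neg a | K _ a | Int a | Box a => (weight a).+1
  | And a b => (maxn (weight a) (weight b)).+1
  | Ann a b => (4 + weight a) * weight b
  end.

Definition rank_lt (g f : F) : Prop :=
  box_depth g < box_depth f \/ box_depth g = box_depth f /\ weight g < weight f.

Lemma box_depth_pal c : pal c -> box_depth c = 0.
Proof. by elim: c => //= [a IHa b IHb|a IHa b IHb] /andP[/IHa -> /IHb ->]. Qed.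

Lemma weight_gt0 f : 0 < weight f.
Proof. by elim: f => //= a _ b; rewrite muln_gt0. Qed.

Lemma rank_lt_weight g f : box_depth g <= box_depth f -> weight g < weight f -> rank_lt g f.
Proof. by rewrite leq_eqVlt => /orP[/eqP|] ?; [right | left]. Qed.

Lemma rank_ind (P : F -> Prop) :
  (forall f, (forall g, rank_lt g f -> P g) -> P f) -> forall f, P f.
Proof.
move=> IH f; have [n] := ubnP (box_depth f); elim: n f => // n IHn f.
have [m] := ubnP (weight f); elim: m f => // m IHm f ltd ltw.
by apply: IH => g [ltd' | [eqd ltw']]; [apply: IHn | apply: IHm]; lia.
Qed.

Lemma reduct_lt a b : (forall c, b <> Box c) -> rank_lt (reduct a b) (Ann a b).
Proof.
have := weight_gt0 a; case: b => [p|b|b c|i b|b|b c|c] wa nbox;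
  try have := weight_gt0 b; try have := weight_gt0 c; last by case: (nbox c).
all: move=> *; apply: rank_lt_weight => /=; nia.
Qed.

End Rank.

Record mct (A : countType) := MCT { mct_set :> form A -> Prop; mctP : maxcons mct_set }.
HB.instance Definition _ (A : countType) := gen_eqMixin (mct A).
HB.instance Definition _ (A : countType) := gen_choiceMixin (mct A).

Section CanonicalModel.
Variable A : countType.
Notation F := (form A).
Implicit Types x y z : mct A.

Definition int_le x y := forall b, x (Int b) -> y b.
Definition upset (O : set (mct A)) := forall x y, O x -> int_le x y -> O y.

Lemma upsetT : upset setT. Proof. by []. Qed.

Lemma upsetI : setI_closed upset.
Proof. by move=> B C hB hC x y [Bx Cx] le_xy; split; [apply: hB Bx _ | apply: hC Cx _]. Qed.

Lemma upset_bigcup (I : Type) (B : I -> set (mct A)) :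
  (forall i, upset (B i)) -> upset (\bigcup_i B i).
Proof. by move=> h x y [i _ Bx] le_xy; exists i => //; apply: h Bx _. Qed.

HB.instance Definition _ := isOpenTopological.Build (mct A) upsetT upsetI upset_bigcup.

Lemma interior_upset (S : set (mct A)) x :
  interior S x <-> exists B, [/\ upset B, B x & B `<=` S].
Proof. by []. Qed.

Lemma lindenbaum_mct (T : F -> Prop) a : theory T -> ~ T a ->
  exists y : mct A, (forall f, T f -> y f) /\ ~ y a.
Proof. by move=> hT /(lindenbaum hT) [y my hy]; exists (MCT my). Qed.

Definition eqK (i : A) x y := forall b, x (K i b) <-> y (K i b).

Lemma eqK_upset i x : upset [set y | eqK i x y].
Proof.
move=> z y /= exz le_zy b; rewrite exz; split=> h.
  by apply/le_zy/(mem_mp (mctP z) (Ax_Kint i _)); apply: (mem_mp (mctP z) (Ax_K4 i b)).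
apply: contrapT => /(mem_neg (mctP z)) /(mem_mp (mctP z) (Ax_K5 i b)).
by move=> /(mem_mp (mctP z) (Ax_Kint i _)) /le_zy /(mem_neg (mctP y)).
Qed.

Lemma canonical_K i a x : (forall y, eqK i x y -> y a) <-> x (K i a).
Proof.
split=> [h | hK y exy]; last by apply: (mem_mp (mctP y) (Ax_KT i a)); apply/exy.
apply: contrapT => /(lindenbaum_mct (K_theory i (maxcons_theory (mctP x)))) [y [sub ya]].
apply: ya; apply: h => b; split=> [hb | hb]; first exact/sub/(mem_mp (mctP x) (Ax_K4 i b)).
apply: contrapT => /(mem_neg (mctP x)) /(mem_mp (mctP x) (Ax_K5 i b)) /sub.
by move/(mem_neg (mctP y)).
Qed.

Lemma canonical_int a x : interior [set y : mct A | y a] x <-> x (Int a).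
Proof.
rewrite interior_upset; split=> [[B [upB Bx BS]] | hi]; last first.
  exists [set y : mct A | y (Int a)]; split=> //.
    by move=> z y /= hz; apply; apply: (mem_mp (mctP z) (Ax_int4 a)).
  by move=> y /=; apply: (mem_mp (mctP y) (Ax_intT a)).
apply: contrapT => /(lindenbaum_mct (int_theory (maxcons_theory (mctP x)))) [y [sub ya]].
by apply: ya; apply: BS; apply: upB Bx _.
Qed.

Definition th0 : pfun A (mct A) := fun x => Some (fun i => [set y | eqK i x y]).

Definition Phi0 : set (pfun A (mct A)) :=
  fun th => exists2 U : set (mct A), open U & th = restrict th0 U.

Lemma Phi0_nfs : nfs Phi0.
Proof.
move=> th [U oU ->]; split=> [x f|V oV].
  2: by exists (U `&` V); [exact: openI | rewrite restrictI].
rewrite /restrict; case: (asboolP (U x)) => // Ux [<-] i; split.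
- by apply: openI => //; apply: eqK_upset.
- by split.
- by move=> y [_ Uy]; apply/dom_restrict.
- move=> y g [exy Uy]; case: (asboolP (U y)) => // _ [<-].
  by congr (_ `&` _); apply/seteqP; split=> z /= e b; [rewrite exy | rewrite -exy].
Qed.

Lemma Phi0_th0 : Phi0 th0.
Proof.
exists setT; first exact: openT.
apply: funext => x; rewrite /restrict asboolT //=.
by congr Some; apply: funext => i; rewrite setIT.
Qed.

Definition canonical_model : topo_model A :=
  @TopoModel A (mct A) Phi0 Phi0_nfs (fun p x => x (Var A p)).

Local Notation "x |= f" := (@sat A canonical_model f th0 x) (at level 70).

Lemma truth_step f :
  (forall g, rank_lt g f -> forall x, x |= g <-> x g) -> forall x, x |= f <-> x f.
Proof.
move=> IH x; have hx := mctP x; case: f IH => [p|a|a b|i a|a|a b|c] IH.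
- by [].
- by rewrite /= IH ?(mem_neg hx) //; apply: rank_lt_weight.
- rewrite /= !IH ?(mem_and hx) //; apply: rank_lt_weight => /=; lia.
- have IHa y : y |= a <-> y a by apply: IH; apply: rank_lt_weight.
  by rewrite -canonical_K; split=> h y /h /IHa.
- have IHa y : y |= a <-> y a by apply: IH; apply: rank_lt_weight.
  rewrite -canonical_int /=; suff -> : [set y | dom th0 y /\ y |= a] = [set y | y a] by [].
  by apply/seteqP; split=> y /=; [case=> _ /IHa | move=> /IHa].
- have [[c b_box]|not_box] := pselect (exists c, b = Box c); last first.
    rewrite sat_reduct (mem_iff hx (thm_reduct a b)); apply: IH.
    by apply: reduct_lt => c bc; apply: not_box; exists c.
  subst b.
  have IHa : x |= Int a <-> x (Int a) by apply: IH; left => /=; lia.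
  have IHb b : pal b -> x |= Ann a (Ann b c) <-> x (Ann a (Ann b c)).
    by move=> pb; apply: IH; left; rewrite /= (box_depth_pal pb); lia.
  rewrite sat_Ann_Box; split=> [h | hac b pb].
    by apply: (mem_Ann_Box hx) => b pb; apply/IHb/h.
  have [hi | hni] := pselect (x (Int a)); first by apply/IHb/(mem_Ann_Box_Ann hx).
  by apply: sat_Ann_vacuous; rewrite IHa.
- have IHb b : pal b -> x |= Ann b c <-> x (Ann b c).
    by move=> pb; apply: IH; left; rewrite /= (box_depth_pal pb).
  by rewrite sat_Box (mem_Box hx); split=> h b pb; apply/IHb/h.
Qed.

Lemma truth f x : x |= f <-> x f.
Proof. by elim/rank_ind: f x => f IH x; apply: truth_step. Qed.

End CanonicalModel.

Theorem mainTheorem3 (A : finType) (hA : 0 < #|A|) (f : form A) :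
  valid f -> thm f.
Proof.
(* Completeness holds for any countable set of agents. *)
move=> vf; apply: contrapT => /(lindenbaum_mct (@thm_theory A)) [x [_ xf]].
by apply/xf/truth; apply: vf; [exact: Phi0_th0 | by []].
Qed.
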